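(* Assume the setting and the CRAIG recurrence described in the context, and let $\ell$ be the index at which the recurrence stops, i.e. $\beta_2,\dots,\beta_\ell>0$ and $\beta_{\ell+1}=0$ (with $\ell\le n$). Then for every $1\le k\le \ell$, $$\|u_*-u^{(k)}\|_M^2+(p_*-p^{(k)})^TC(p_*-p^{(k)})=\|p_*-p^{(k)}\|_S^2=\sum_{i=k+1}^{\ell}\zeta_i^2,$$ where $\|x\|_S=(x^TSx)^{1/2}$. In particular $\|u_*-u^{(k)}\|_M^2\le\sum_{i=k+1}^{\ell}\zeta_i^2$, and the sequence $\|p_*-p^{(k)}\|_S$, $k=1,\dots,\ell$, is strictly decreasing.
   Context: Setting: $M\in\mathbb{R}^{m\times m}$ is symmetric positive definite, $A\in\mathbb{R}^{m\times n}$ ($n\le m$) has full column rank, $C\in\mathbb{R}^{n\times n}$ is symmetric positive semidefinite, $b\in\mathbb{R}^n$ is nonzero, and $N\in\mathbb{R}^{n\times n}$ is symmetric positive definite (the preconditioner). For a symmetric positive definite $G$ write $\|x\|_G=(x^TGx)^{1/2}$. The generalized saddle point system is $Mu+Ap=0$, $A^Tu-Cp=b$, with unique solution $(u_*,p_* )$; $S=A^TM^{-1}A+C$. CRAIG recurrence (exact arithmetic): Initialization: $\beta_1=\|b\|_{N^{-1}}$, $q_1=N^{-1}b/\beta_1$, $r_1=q_1$, $w_1=M^{-1}Aq_1$, $s_1=Cr_1$, $\alpha_1=(w_1^TMw_1+r_1^Ts_1)^{1/2}$, $v_1=w_1/\alpha_1$, $t_1=s_1/\alpha_1$, $\zeta_1=\beta_1/\alpha_1$,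 $u^{(1)}=\zeta_1v_1$, $p^{(1)}=-(\zeta_1/\alpha_1)r_1$. For $k=1,2,\dots$: $g_k=N^{-1}(A^Tv_k+t_k)-\alpha_kq_k$, $\beta_{k+1}=\|g_k\|_N$; if $\beta_{k+1}=0$ the recurrence stops; otherwise $q_{k+1}=g_k/\beta_{k+1}$, $w_{k+1}=M^{-1}Aq_{k+1}-\beta_{k+1}v_k$, $r_{k+1}=q_{k+1}-(\beta_{k+1}/\alpha_k)r_k$, $s_{k+1}=Cr_{k+1}$, $\alpha_{k+1}=(w_{k+1}^TMw_{k+1}+r_{k+1}^Ts_{k+1})^{1/2}$, $v_{k+1}=w_{k+1}/\alpha_{k+1}$, $t_{k+1}=s_{k+1}/\alpha_{k+1}$, $\zeta_{k+1}=-(\beta_{k+1}/\alpha_{k+1})\zeta_k$, $u^{(k+1)}=u^{(k)}+\zeta_{k+1}v_{k+1}$, $p^{(k+1)}=p^{(k)}-(\zeta_{k+1}/\alpha_{k+1})r_{k+1}$. *)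

From HB Require Import structures.
From mathcomp Require Import all_boot all_order all_algebra.
Set Implicit Arguments. Unset Strict Implicit. Unset Printing Implicit Defensive.
Import Order.TTheory GRing.Theory Num.Theory.
Local Open Scope ring_scope.

Section Craig.
Variables (R : rcfType) (m n : nat).

Definition qf k (G : 'M[R]_k) (x : 'cV[R]_k) : R := (x^T *m G *m x) 0 0.
Definition Gnorm k (G : 'M[R]_k) (x : 'cV[R]_k) : R := Num.sqrt (qf G x).

Definition sym_pd k (G : 'M[R]_k) : Prop :=
  G^T = G /\ forall x : 'cV[R]_k, x != 0 -> 0 < qf G x.
Definition sym_psd k (G : 'M[R]_k) : Prop :=
  G^T = G /\ forall x : 'cV[R]_k, 0 <= qf G x.

Record craig_state := CraigState {
  cq : 'cV[R]_n; cr : 'cV[R]_n; cv : 'cV[R]_m; ct : 'cV[R]_n;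
  calpha : R; cbeta : R; czeta : R; cu : 'cV[R]_m; cp : 'cV[R]_n }.

Variables (M : 'M[R]_m) (A : 'M[R]_(m, n)) (C N : 'M[R]_n) (b : 'cV[R]_n).

Definition craig_init : craig_state :=
  let beta1 := Gnorm (invmx N) b in
  let q1 := beta1^-1 *: (invmx N *m b) in
  let r1 := q1 in
  let w1 := invmx M *m A *m q1 in
  let s1 := C *m r1 in
  let alpha1 := Num.sqrt (qf M w1 + (r1^T *m s1) 0 0) in
  let v1 := alpha1^-1 *: w1 in
  let t1 := alpha1^-1 *: s1 in
  let zeta1 := beta1 / alpha1 in
  CraigState q1 r1 v1 t1 alpha1 beta1 zeta1 (zeta1 *: v1) (- ((zeta1 / alpha1) *: r1)).

(* one step k -> k+1 (only meaningful when beta_{k+1} > 0) *)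
Definition craig_step (st : craig_state) : craig_state :=
  let g := invmx N *m (A^T *m cv st + ct st) - calpha st *: cq st in
  let beta' := Gnorm N g in
  let q' := beta'^-1 *: g in
  let w' := invmx M *m A *m q' - beta' *: cv st in
  let r' := q' - (beta' / calpha st) *: cr st in
  let s' := C *m r' in
  let alpha' := Num.sqrt (qf M w' + (r'^T *m s') 0 0) in
  let v' := alpha'^-1 *: w' in
  let t' := alpha'^-1 *: s' in
  let zeta' := - (beta' / alpha') * czeta st in
  CraigState q' r' v' t' alpha' beta' zeta'
    (cu st + zeta' *: v') (cp st - (zeta' / alpha') *: r').

(* craig_iter j is the state at index j+1 *)
Fixpoint craig_iter (j : nat) : craig_state :=
  if j is j'.+1 then craig_step (craig_iter j') else craig_init.

(* 1-based accessors: for i >= 1 *)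
Definition beta_ i := cbeta (craig_iter i.-1).
Definition zeta_ i := czeta (craig_iter i.-1).
Definition u_ k := cu (craig_iter k.-1).
Definition p_ k := cp (craig_iter k.-1).

End Craig.

From HB Require Import structures.
From mathcomp Require Import all_boot all_order all_algebra.
From mathcomp Require Import ring.
Import Order.TTheory GRing.Theory Num.Theory.
Local Open Scope ring_scope.
Set Implicit Arguments. Unset Strict Implicit. Unset Printing Implicit Defensive.

(* Since u^(k) = -M^-1 A p^(k), CRAIG is the conjugate gradient method for the
   Schur complement system S p = -b, preconditioned by N: the q_i are
   N-orthonormal, the directions r_i are S-conjugate with r_i^T S r_i = alpha_i^2,
   and S p^(k) = -b - zeta_k beta_{k+1} N q_{k+1}.  Hence p^(l) = p_*, the error
   p_* - p^(k) is the S-orthogonal sum of the steps (zeta_i / alpha_i) r_i, i > k,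
   and Pythagoras gives sum_{i>k} zeta_i^2; the u-part of the energy norm is
   u_* - u^(k) = -M^-1 A (p_* - p^(k)). *)

Section Forms.
Variables (R : rcfType) (k : nat).
Implicit Types (G : 'M[R]_k) (x y z : 'cV[R]_k).

Definition bil G x y : R := (x^T *m G *m y) 0 0.

Lemma qfE G x : qf G x = bil G x x. Proof. by []. Qed.

Lemma bilDr G x y z : bil G x (y + z) = bil G x y + bil G x z.
Proof. by rewrite /bil mulmxDr mxE. Qed.

Lemma bilZr G x a y : bil G x (a *: y) = a * bil G x y.
Proof. by rewrite /bil -scalemxAr mxE. Qed.

Lemma bilBr G x y z : bil G x (y - z) = bil G x y - bil G x z.
Proof. by rewrite bilDr -scaleN1r bilZr mulN1r. Qed.

Lemma bilDl G x y z : bil G (x + y) z = bil G x z + bil G y z.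
Proof. by rewrite /bil linearD /= !mulmxDl mxE. Qed.

Lemma bilZl G x a y : bil G (a *: x) y = a * bil G x y.
Proof. by rewrite /bil linearZ /= -!scalemxAl mxE. Qed.

Lemma bil0r G x : bil G x 0 = 0.
Proof. by rewrite /bil mulmx0 mxE. Qed.

Lemma bil_sumr G x I (s : seq I) (P : pred I) (y : I -> 'cV[R]_k) :
  bil G x (\sum_(i <- s | P i) y i) = \sum_(i <- s | P i) bil G x (y i).
Proof. by rewrite /bil mulmx_sumr summxE. Qed.

Lemma bil_suml G y I (s : seq I) (P : pred I) (x : I -> 'cV[R]_k) :
  bil G (\sum_(i <- s | P i) x i) y = \sum_(i <- s | P i) bil G (x i) y.
Proof. by rewrite /bil linear_sum !mulmx_suml summxE. Qed.

Lemma bil_sym G x y : G^T = G -> bil G x y = bil G y x.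
Proof.
move=> G_sym; rewrite /bil.
have -> : y^T *m G *m x = (x^T *m G *m y)^T by rewrite !trmx_mul trmxK G_sym mulmxA.
by rewrite [RHS]mxE.
Qed.

Lemma qfZ G a x : qf G (a *: x) = a ^+ 2 * qf G x.
Proof. by rewrite !qfE bilZl bilZr mulrA -expr2. Qed.

Lemma qfN G x : qf G (- x) = qf G x.
Proof. by rewrite -scaleN1r qfZ sqrrN expr1n mul1r. Qed.

Lemma qf_invmx G x : G \in unitmx -> G^T = G -> qf G (invmx G *m x) = qf (invmx G) x.
Proof. by move=> G_unit G_sym; rewrite /qf trmx_mul trmx_inv G_sym !mulmxA mulmxK. Qed.

Lemma qf_sum_orth G (x : nat -> 'cV[R]_k) a c :
  (forall i j, (a <= i < c)%N -> (a <= j < c)%N -> i != j -> bil G (x i) (x j) = 0) ->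
  qf G (\sum_(a <= i < c) x i) = \sum_(a <= i < c) qf G (x i).
Proof.
elim: c => [|c IH] orth; first by rewrite !big_geq // qfE bil0r.
have [ac|ca] := leqP a c; last by rewrite !big_geq // qfE bil0r.
have orth_c i : (a <= i < c)%N -> bil G (x i) (x c) = 0 /\ bil G (x c) (x i) = 0.
  move=> /andP[ai ic]; have ac1 : (a <= c < c.+1)%N by rewrite ac ltnSn.
  have aic : (a <= i < c.+1)%N by rewrite ai ltnW.
  by rewrite !orth // ?(ltn_eqF ic) ?(gtn_eqF ic).
rewrite !big_nat_recr //= qfE bilDl !bilDr -qfE IH; last first.
  by move=> i j /andP[ai ic] /andP[aj jc]; apply: orth; rewrite ?ai ?aj ltnS ltnW.
have -> : bil G (\sum_(a <= i < c) x i) (x c) = 0.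
  by rewrite bil_suml big1_seq // => i /andP[_]; rewrite mem_index_iota => /orth_c[].
have -> : bil G (x c) (\sum_(a <= i < c) x i) = 0.
  by rewrite bil_sumr big1_seq // => i /andP[_]; rewrite mem_index_iota => /orth_c[].
by rewrite addr0 add0r.
Qed.

Lemma pd_ge0 G x : sym_pd G -> 0 <= qf G x.
Proof. by move=> [_ G_pos]; have [->|/G_pos/ltW //] := eqVneq x 0; rewrite qfE bil0r. Qed.

Lemma sqr_Gnorm G x : sym_pd G -> Gnorm G x ^+ 2 = qf G x.
Proof. by move=> G_pd; rewrite sqr_sqrtr // pd_ge0. Qed.

Lemma Gnorm_eq0 G x : sym_pd G -> (Gnorm G x == 0) = (x == 0).
Proof.
move=> G_pd; rewrite sqrtr_eq0; apply/idP/eqP => [|->]; last by rewrite qfE bil0r.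
by apply: contraTeq => /G_pd.2; rewrite -ltNge.
Qed.

Lemma pd_unitmx G : sym_pd G -> G \in unitmx.
Proof.
move=> [_ G_pos]; rewrite unitmxE unitfE; apply/det0P => -[v v_neq0 vG0].
have := G_pos v^T; rewrite /qf trmxK vG0 mul0mx mxE ltxx.
by rewrite -[v]trmxK trmx_eq0 in v_neq0 => /(_ v_neq0).
Qed.

Lemma pd_invmx G : sym_pd G -> sym_pd (invmx G).
Proof.
move=> G_pd; have G_unit := pd_unitmx G_pd; have [G_sym G_pos] := G_pd.
split=> [|x x_neq0]; first by rewrite trmx_inv G_sym.
rewrite -qf_invmx //; apply: G_pos; apply: contra x_neq0 => /eqP Gx0.
by rewrite -(mulKVmx G_unit x) Gx0 mulmx0.
Qed.

End Forms.

Section ConjugateDirections.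
Variables (R : rcfType) (n : nat) (N S : 'M[R]_n).
Variables (q r : nat -> 'cV[R]_n) (al be : nat -> R).
(* Residuals q and directions r of preconditioned conjugate gradients for S,
   written as the CRAIG recurrences after eliminating v, t, w and s. *)
Hypothesis N_sym : N^T = N.
Hypothesis S_pd : sym_pd S.
Hypothesis qf_q0 : qf N (q 0) = 1.
Hypothesis qf_qS : forall K, be K.+1 != 0 -> qf N (q K.+1) = 1.
Hypothesis r0 : r 0 = q 0.
Hypothesis rS : forall K, r K.+1 = q K.+1 - (be K.+1 / al K) *: r K.
Hypothesis al_sq : forall K, al K ^+ 2 = qf S (r K).
Hypothesis S_r : forall K, al K != 0 ->
  S *m r K = N *m (al K ^+ 2 *: q K + (al K * be K.+1) *: q K.+1).

Definition orthogonal_upto K := forall i j, (i <= K)%N -> (j <= K)%N ->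
  [/\ bil N (q i) (q j) = (i == j)%:R,
      bil S (r i) (r j) = (i == j)%:R * al i ^+ 2
    & (j <= i)%N -> bil N (q i) (r j) = (i == j)%:R].

Section Projections.
Variables (K i j : nat).
Hypotheses (orth : orthogonal_upto K) (iK : (i <= K)%N) (jK : (j <= K)%N).

Lemma orth_qq : bil N (q i) (q j) = (i == j)%:R.
Proof. by case: (orth iK jK). Qed.

Lemma orth_rr : bil S (r i) (r j) = (i == j)%:R * al i ^+ 2.
Proof. by case: (orth iK jK). Qed.

Lemma orth_qr : (j <= i)%N -> bil N (q i) (r j) = (i == j)%:R.
Proof. by case: (orth iK jK). Qed.

End Projections.

Let bilN_sym x y : bil N x y = bil N y x. Proof. exact: bil_sym. Qed.
Let bilS_sym x y : bil S x y = bil S y x. Proof. exact: bil_sym S_pd.1. Qed.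

Lemma bil_S_r x K : al K != 0 ->
  bil S x (r K) = al K ^+ 2 * bil N x (q K) + al K * be K.+1 * bil N x (q K.+1).
Proof. by move=> alK; rewrite -!bilZr -bilDr /bil -mulmxA S_r // mulmxA. Qed.

Lemma orthogonal_al_neq0 K i : orthogonal_upto K -> (i <= K)%N -> al i != 0.
Proof.
move=> orth iK; have := orth_qr orth iK iK (leqnn i); rewrite eqxx => qr1.
have r_neq0 : r i != 0 by apply: contra_eqN qr1 => /eqP->; rewrite bil0r eq_sym oner_eq0.
by rewrite -sqrf_eq0 al_sq gt_eqF // S_pd.2.
Qed.

Section Step.
Variable K : nat.
Hypothesis orth : orthogonal_upto K.
Hypothesis be_neq0 : be K.+1 != 0.

Let alK : al K != 0. Proof. exact: orthogonal_al_neq0 orth (leqnn K). Qed.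

Lemma bil_r_q j : (j <= K)%N -> bil S (r K) (q j) = (j == K)%:R * al K ^+ 2.
Proof.
case: j => [|j] jK; first by rewrite -r0 (orth_rr orth) // eq_sym.
rewrite -[q j.+1](subrK ((be j.+1 / al j) *: r j)) -rS bilDr bilZr.
by rewrite !(orth_rr orth) ?(ltnW jK) // eq_sym (gtn_eqF jK) mul0r mulr0 addr0.
Qed.

Lemma q_next_orth_q j : (j <= K)%N -> bil N (q K.+1) (q j) = 0.
Proof.
move=> jK; have := bil_S_r (q j) alK.
rewrite bilS_sym bil_r_q // (orth_qq orth) // bilN_sym mulrC -[LHS]addr0.
move=> /addrI/esym/eqP; rewrite !mulf_eq0.
by rewrite (negbTE alK) (negbTE be_neq0) => /eqP.
Qed.

Lemma q_next_orth_r j : (j <= K)%N -> bil N (q K.+1) (r j) = 0.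
Proof.
elim: j => [|j IH] jK; first by rewrite r0 q_next_orth_q.
by rewrite rS bilBr bilZr IH ?(ltnW jK) // q_next_orth_q // mulr0 subr0.
Qed.

Lemma q_next_r_next : bil N (q K.+1) (r K.+1) = 1.
Proof. by rewrite rS bilBr bilZr q_next_orth_r // mulr0 subr0 -qfE qf_qS. Qed.

Lemma r_next_conj j : (j <= K)%N -> bil S (r K.+1) (r j) = 0.
Proof.
move=> jK; have alj := orthogonal_al_neq0 orth jK.
rewrite bilS_sym rS bilBr bilZr bilS_sym bil_S_r // q_next_orth_q // mulr0 add0r.
rewrite (orth_rr orth) //; move: jK alj; rewrite leq_eqVlt => /predU1P[->|jK] alj.
  by rewrite -qfE qf_qS // eqxx mul1r; field.
by rewrite q_next_orth_q // (ltn_eqF jK) mul0r !mulr0 subrr.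
Qed.

Lemma orthogonal_step : orthogonal_upto K.+1.
Proof.
move=> i j; rewrite (leq_eqVlt i) (leq_eqVlt j) !ltnS.
move=> /predU1P[->|iK] /predU1P[->|jK].
- rewrite eqxx mul1r -!qfE -al_sq qf_qS //; split=> // _; exact: q_next_r_next.
- rewrite gtn_eqF // mul0r q_next_orth_q // r_next_conj //; split=> // _.
  exact: q_next_orth_r.
- rewrite ltn_eqF // mul0r bilN_sym q_next_orth_q // bilS_sym r_next_conj //.
  by split=> // /leq_trans/(_ iK); rewrite ltnn.
- exact: orth.
Qed.

End Step.

Lemma orthogonal_upto_all K : (forall j, (0 < j <= K)%N -> be j != 0) -> orthogonal_upto K.
Proof.
elim: K => [|K IH] be_neq0.
  move=> i j; rewrite !leqn0 => /eqP-> /eqP->.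
  by rewrite eqxx mul1r -!qfE -al_sq qf_q0 r0 -qfE qf_q0.
apply: orthogonal_step; last by apply: be_neq0; rewrite leqnn.
by apply: IH => j /andP[j0 jK]; apply: be_neq0; rewrite j0 leqW.
Qed.
End ConjugateDirections.

Module Craig.
Section Recurrence.
Variables (R : rcfType) (m n : nat).
Variables (M : 'M[R]_m) (A : 'M[R]_(m, n)) (C N : 'M[R]_n) (b : 'cV[R]_n).
Hypotheses (M_pd : sym_pd M) (A_rank : \rank A = n) (C_psd : sym_psd C).
Hypotheses (b_neq0 : b != 0) (N_pd : sym_pd N).

(* Index K is the paper's index K + 1. *)
Let st K := craig_iter M A C N b K.
Let q K := cq (st K).
Let r K := cr (st K).
Let v K := cv (st K).
Let t K := ct (st K).
Let al K := calpha (st K).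
Let be K := cbeta (st K).
Let ze K := czeta (st K).
Let u K := cu (st K).
Let p K := cp (st K).
Let Mi := invmx M.
Let Ni := invmx N.
Let S := A^T *m Mi *m A + C.

Lemma be0 : be 0 = Gnorm (invmx N) b. Proof. by []. Qed.
Lemma q0 : q 0 = (be 0)^-1 *: (Ni *m b). Proof. by []. Qed.
Lemma r0 : r 0 = q 0. Proof. by []. Qed.
Lemma v0 : v 0 = (al 0)^-1 *: (Mi *m A *m q 0). Proof. by []. Qed.
Lemma al0 : al 0 = Num.sqrt (qf M (Mi *m A *m q 0) + ((r 0)^T *m (C *m r 0)) 0 0).
Proof. by []. Qed.
Lemma ze0 : ze 0 = be 0 / al 0. Proof. by []. Qed.
Lemma u0 : u 0 = ze 0 *: v 0. Proof. by []. Qed.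
Lemma p0 : p 0 = - ((ze 0 / al 0) *: r 0). Proof. by []. Qed.

Lemma beS K : be K.+1 = Gnorm N (Ni *m (A^T *m v K + t K) - al K *: q K). Proof. by []. Qed.
Lemma qS K : q K.+1 = (be K.+1)^-1 *: (Ni *m (A^T *m v K + t K) - al K *: q K).
Proof. by []. Qed.
Lemma rS K : r K.+1 = q K.+1 - (be K.+1 / al K) *: r K. Proof. by []. Qed.
Lemma vS K : v K.+1 = (al K.+1)^-1 *: (Mi *m A *m q K.+1 - be K.+1 *: v K).
Proof. by []. Qed.
Lemma alS K : al K.+1 =
  Num.sqrt (qf M (Mi *m A *m q K.+1 - be K.+1 *: v K) + ((r K.+1)^T *m (C *m r K.+1)) 0 0).
Proof. by []. Qed.
Lemma zeS K : ze K.+1 = - (be K.+1 / al K.+1) * ze K. Proof. by []. Qed.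
Lemma uS K : u K.+1 = u K + ze K.+1 *: v K.+1. Proof. by []. Qed.
Lemma pS K : p K.+1 = p K - (ze K.+1 / al K.+1) *: r K.+1. Proof. by []. Qed.
Lemma t_eq K : t K = (al K)^-1 *: (C *m r K). Proof. by case: K. Qed.

Let M_unit : M \in unitmx. Proof. exact: pd_unitmx. Qed.
Let N_unit : N \in unitmx. Proof. exact: pd_unitmx. Qed.
Let Mi_sym : Mi^T = Mi. Proof. by rewrite trmx_inv M_pd.1. Qed.

Lemma qf_S x : qf S x = qf M (Mi *m A *m x) + qf C x.
Proof.
rewrite /qf /S mulmxDr mulmxDl mxE; congr (_ + _).
by rewrite !trmx_mul Mi_sym !mulmxA mulmxKV.
Qed.

Lemma S_pd : sym_pd S.
Proof.
split=> [|x x_neq0]; first by rewrite /S linearD /= !trmx_mul trmxK Mi_sym C_psd.1 mulmxA.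
rewrite qf_S ltr_pwDl ?C_psd.2 // M_pd.2 //.
apply: contra x_neq0 => /eqP /(congr1 (mulmx M)); rewrite !mulmxA mulmxV // mul1mx mulmx0.
move=> Ax0; have A_free : row_free A^T by rewrite /row_free mxrank_tr A_rank.
by rewrite -trmx_eq0 -(mulmx_free_eq0 _ A_free) -trmx_mul Ax0 trmx0.
Qed.

Lemma v_eq K : v K = (al K)^-1 *: (Mi *m A *m r K).
Proof.
elim: K => [|K IH]; first by rewrite v0 r0.
by rewrite vS IH rS mulmxBr -!scalemxAr scalerA.
Qed.

Lemma u_eq K : u K = - (Mi *m A *m p K).
Proof.
elim: K => [|K IH]; first by rewrite u0 p0 v_eq r0 mulmxN opprK -!scalemxAr !scalerA.
rewrite uS pS IH v_eq; move: (p K) (r K.+1) => pK rK.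
by rewrite mulmxBr -scalemxAr scalerA opprB addrC.
Qed.

Lemma MiA_rS K : Mi *m A *m r K.+1 = Mi *m A *m q K.+1 - be K.+1 *: v K.
Proof. by rewrite rS v_eq mulmxBr scalerA scalemxAr. Qed.

Lemma al_sq K : al K ^+ 2 = qf S (r K).
Proof.
have alE : al K = Num.sqrt (qf S (r K)).
  case: K => [|K]; first by rewrite al0 qf_S -r0 /qf mulmxA.
  by rewrite alS qf_S -MiA_rS /qf mulmxA.
by rewrite alE sqr_sqrtr //; apply: pd_ge0 S_pd.
Qed.

(* When beta_{K+1} = 0 the vector q_{K+1} is junk, but then g_K = 0 since N is definite. *)
Lemma scale_q_next K : be K.+1 *: q K.+1 = Ni *m (A^T *m v K + t K) - al K *: q K.
Proof.
have [be_eq0|be_neq0] := eqVneq (be K.+1) 0; last by rewrite qS scalerA mulfV // scale1r.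
by rewrite be_eq0 scale0r; apply/esym/eqP; rewrite -(Gnorm_eq0 _ N_pd) -beS be_eq0.
Qed.

Lemma S_r K : al K != 0 ->
  S *m r K = N *m (al K ^+ 2 *: q K + (al K * be K.+1) *: q K.+1).
Proof.
move=> alK; rewrite -scalerA scale_q_next scalerBr scalerA -expr2 addrC subrK.
rewrite -scalemxAr mulmxA mulmxV // mul1mx v_eq t_eq -!scalemxAr -scalerDr scalerA.
by rewrite mulfV // scale1r /S mulmxDl !mulmxA.
Qed.

Lemma be0_neq0 : be 0 != 0.
Proof. by rewrite be0 Gnorm_eq0 //; apply: pd_invmx. Qed.

Lemma qf_q0 : qf N (q 0) = 1.
Proof.
rewrite q0 qfZ qf_invmx ?N_pd.1 // -(sqr_Gnorm _ (pd_invmx N_pd)) -be0.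
by rewrite -exprMn mulVf ?be0_neq0 // expr1n.
Qed.

Lemma qf_qS K : be K.+1 != 0 -> qf N (q K.+1) = 1.
Proof. by move=> beK; rewrite qS qfZ -sqr_Gnorm // -beS -exprMn mulVf // expr1n. Qed.

Lemma craig_orthogonal K :
  (forall j, (0 < j <= K)%N -> be j != 0) -> orthogonal_upto N S q r al K.
Proof.
apply: orthogonal_upto_all => //; [exact: N_pd.1 | exact: S_pd | exact: qf_q0 |
  exact: qf_qS | exact: al_sq | exact: S_r].
Qed.

Lemma N_q0 : be 0 *: (N *m q 0) = b.
Proof.
by rewrite q0 -scalemxAr scalerA mulfV ?be0_neq0 // scale1r mulmxA mulmxV // mul1mx.
Qed.

Lemma p_telescope K j : (K <= j)%N ->
  p j - p K = \sum_(K <= i < j) (- (ze i.+1 / al i.+1)) *: r i.+1.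
Proof.
by move=> Kj; rewrite (telescope_sumr_eq p) // => i _; rewrite pS addrAC subrr add0r scaleNr.
Qed.

Section Solution.
Variables (ustar : 'cV[R]_m) (pstar : 'cV[R]_n).
Hypotheses (eq_u : M *m ustar + A *m pstar = 0) (eq_p : A^T *m ustar - C *m pstar = b).

Lemma ustar_eq : ustar = - (Mi *m A *m pstar).
Proof.
have : M *m ustar = - (A *m pstar) by apply/eqP; rewrite -addr_eq0 eq_u.
by move=> /(congr1 (mulmx Mi)); rewrite mulmxA mulVmx // mul1mx mulmxN mulmxA.
Qed.

Lemma S_pstar : S *m pstar = - b.
Proof. by rewrite -eq_p ustar_eq /S mulmxDl mulmxN !mulmxA opprB opprK addrC. Qed.

Lemma energy_split K :
  Gnorm M (ustar - u K) ^+ 2 + qf C (pstar - p K) = Gnorm S (pstar - p K) ^+ 2.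
Proof.
rewrite (sqr_Gnorm _ M_pd) (sqr_Gnorm _ S_pd) qf_S ustar_eq u_eq opprK.
by rewrite [- _ + _]addrC -opprB qfN -mulmxBr.
Qed.

Section Termination.
Variable l : nat.
Hypotheses (l_gt0 : (0 < l)%N) (be_neq0 : forall K, (0 < K < l)%N -> be K != 0).
Hypothesis be_l : be l = 0.

Let leq_pred_l K : (K <= l.-1)%N = (K < l)%N. Proof. by rewrite -ltnS prednK. Qed.

Let orth : orthogonal_upto N S q r al l.-1.
Proof.
by apply: craig_orthogonal => j /andP[j0 jl]; apply: be_neq0; rewrite j0 -leq_pred_l.
Qed.

Lemma al_neq0 K : (K < l)%N -> al K != 0.
Proof. by rewrite -leq_pred_l; apply: (orthogonal_al_neq0 S_pd al_sq orth). Qed.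

Lemma r_conj i j : (i < l)%N -> (j < l)%N -> bil S (r i) (r j) = (i == j)%:R * al i ^+ 2.
Proof. by rewrite -!leq_pred_l; apply: orth_rr orth. Qed.

Lemma S_p K : (K < l)%N -> S *m p K = - b - (ze K * be K.+1) *: (N *m q K.+1).
Proof.
elim: K => [|K IH] Kl.
  have al0_neq0 := al_neq0 Kl.
  rewrite p0 mulmxN -[S *m _]scalemxAr S_r // -N_q0 ze0; move: (q 0) (q 1) => x y.
  rewrite mulmxDr -!scalemxAr scalerDr !scalerA opprD.
  by congr (- (_ *: _) - (_ *: _)); field.
have alK1 := al_neq0 Kl.
rewrite pS mulmxBr (IH (ltnW Kl)) -[S *m _]scalemxAr S_r // zeS.
move: (q K.+1) (q K.+2) (al K.+1) (be K.+1) (be K.+2) (ze K) alK1 => x y a b1 b2 z a_neq0.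
rewrite mulmxDr -!scalemxAr scalerDr !scalerA.
have -> : - (b1 / a) * z / a * a ^+ 2 = - (z * b1) by field.
have -> : - (b1 / a) * z / a * (a * b2) = - (b1 / a) * z * b2 by field.
by rewrite scaleNr opprD opprK addrA subrK.
Qed.

Lemma ze_neq0 K : (K < l)%N -> ze K != 0.
Proof.
elim: K => [|K IH] Kl; first by rewrite ze0 mulf_neq0 ?invr_eq0 ?be0_neq0 ?al_neq0.
rewrite zeS mulf_neq0 ?IH ?(ltnW Kl) // oppr_eq0 mulf_neq0 ?invr_eq0 ?al_neq0 //.
by apply: be_neq0; rewrite Kl.
Qed.

Lemma pstar_eq : pstar = p l.-1.
Proof.
have S_p_last : S *m p l.-1 = - b.
  by rewrite S_p ?ltn_predL // prednK // be_l mulr0 scale0r subr0.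
by apply: (can_inj (mulKmx (pd_unitmx S_pd))); rewrite S_pstar S_p_last.
Qed.

Lemma qf_p_sub K j : (K <= j < l)%N -> qf S (p j - p K) = \sum_(K <= i < j) ze i.+1 ^+ 2.
Proof.
move=> /andP[Kj jl]; rewrite p_telescope // qf_sum_orth.
  apply: eq_big_nat => i /andP[_ ij]; have ail := al_neq0 (leq_ltn_trans ij jl).
  by rewrite qfZ -al_sq; field.
move=> i i' /andP[_ ij] /andP[_ i'j] ii'.
rewrite bilZl bilZr r_conj ?(leq_ltn_trans ij jl) ?(leq_ltn_trans i'j jl) //.
by rewrite eqSS (negbTE ii') mul0r !mulr0.
Qed.

Lemma sqr_Gnorm_err k : (0 < k <= l)%N ->
  Gnorm S (pstar - p k.-1) ^+ 2 = \sum_(k.+1 <= i < l.+1) ze i.-1 ^+ 2.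
Proof.
move=> /andP[k0 kl]; rewrite (sqr_Gnorm _ S_pd) pstar_eq qf_p_sub; last first.
  by rewrite -!subn1 leq_sub2r //= subn1 ltn_predL.
have -> : k.+1 = (k.-1 + 2)%N by rewrite addn2 prednK.
by rewrite big_addn subn2; apply: eq_big_nat => i _; rewrite addn2.
Qed.

Lemma Gnorm_err_decr k : (0 < k < l)%N -> Gnorm S (pstar - p k) < Gnorm S (pstar - p k.-1).
Proof.
move=> /andP[k0 kl]; have ze_sq_gt0 : 0 < ze k ^+ 2 by rewrite lt_def sqr_ge0 sqrf_eq0 ze_neq0.
have Gnorm_sqrt x : Gnorm S x = Num.sqrt (Gnorm S x ^+ 2).
  by rewrite sqrtr_sqr ger0_norm ?sqrtr_ge0.
rewrite [X in X < _]Gnorm_sqrt [X in _ < X]Gnorm_sqrt.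
rewrite (sqr_Gnorm_err (k := k.+1)) ?kl // sqr_Gnorm_err ?k0 ?(ltnW kl) //.
rewrite [in X in _ < X]big_ltn ?ltnS ?(ltnW kl) // ltr_sqrt ?ltrDr //.
by rewrite ltr_pwDl ?sumr_ge0 // => i _; rewrite sqr_ge0.
Qed.

End Termination.
End Solution.
End Recurrence.
End Craig.

Theorem mainTheorem5 (R : rcfType) (m n : nat)
  (M : 'M[R]_m) (A : 'M[R]_(m, n)) (C N : 'M[R]_n) (b : 'cV[R]_n)
  (ustar : 'cV[R]_m) (pstar : 'cV[R]_n) (l : nat) :
  (n <= m)%N ->
  sym_pd M -> \rank A = n -> sym_psd C -> b != 0 -> sym_pd N ->
  M *m ustar + A *m pstar = 0 ->
  A^T *m ustar - C *m pstar = b ->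
  (1 <= l)%N ->
  (forall i, (2 <= i <= l)%N -> 0 < beta_ M A C N b i) ->
  beta_ M A C N b l.+1 = 0 ->
  let S := A^T *m invmx M *m A + C in
  let eu k := ustar - u_ M A C N b k in
  let ep k := pstar - p_ M A C N b k in
  (forall k, (1 <= k <= l)%N ->
     Gnorm M (eu k) ^+ 2 + qf C (ep k) = Gnorm S (ep k) ^+ 2 /\
     Gnorm S (ep k) ^+ 2 = \sum_(k.+1 <= i < l.+1) zeta_ M A C N b i ^+ 2) /\
  (forall k, (1 <= k <= l)%N ->
     Gnorm M (eu k) ^+ 2 <= \sum_(k.+1 <= i < l.+1) zeta_ M A C N b i ^+ 2) /\
  (forall k, (1 <= k < l)%N -> Gnorm S (ep k.+1) < Gnorm S (ep k)).
Proof.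
(* [n <= m] is implied by [\rank A = n] and not needed. *)
move=> _ M_pd A_rank C_psd b_neq0 N_pd eq_u eq_p l_gt0 be_pos be_l S eu ep.
have be_neq0 K : (0 < K < l)%N -> cbeta (craig_iter M A C N b K) != 0.
  by move=> /andP[K0 Kl]; rewrite gt_eqF // (be_pos K.+1) // ltnS K0.
have err_sq k := Craig.sqr_Gnorm_err M_pd A_rank C_psd b_neq0 N_pd eq_u eq_p l_gt0
  be_neq0 be_l (k := k).
have energy k := Craig.energy_split N b M_pd A_rank C_psd eq_u k.-1.
split; [|split] => k kl.
- by split; [exact: energy | exact: err_sq].
- by rewrite -err_sq // -energy lerDl C_psd.2.
- by have := Craig.Gnorm_err_decr M_pd A_rank C_psd b_neq0 N_pd eq_u eq_p l_gt0
    be_neq0 be_l kl.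
Qed.
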